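(* If Algorithm 1 is run for any integer $T\ge\frac{2w^2\log(n/\epsilon)}{\epsilon^2}$ iterations, then for every $i\in[n]$, $\Pr[S_i-U_i\ge\epsilon T]\le\frac{\epsilon}{n}$.
   Context: Standing setup: $A\in\mathbb{R}^{m\times n}_{\ge 0}$ has no zero column and is normalized so that $\min_{i\in[n]}\|A_{:i}\|_\infty=1$, where $A_{:i}$ denotes the $i$-th column. $\epsilon\in(0,1/2]$. $\log$ is natural unless written $\log_2$. $\mu=\frac{\epsilon}{4\log(nm/\epsilon)}$, $p_j(x)=\exp\big(\frac{1}{\mu}((Ax)_j-1)\big)$, $f_\mu(x)=-\mathbf 1^Tx+\mu\sum_jp_j(x)$, $\nabla_i f_\mu(x)=-1+\sum_jA_{ji}p_j(x)$. Algorithm 1 with $T$ iterations: set $\alpha=\mu/20$, $w=\lceil\log_2(1/\epsilon)\rceil$, $x_0[i]=\frac{1-\epsilon/2}{n\|A_{:i}\|_\infty}$. For $k=0,\dots,T-1$: choose $t_k\in\{0,\dots,w-1\}$ uniformly at random, independently of the past; writing $g_i=\nabla_i f_\mu(x_k)$, define $\xi_k[i]=0$ if $|g_i|\le\epsilon$, $\xi_k[i]=g_i$ if $\epsilon<|g_i|\le 1$, $\xi_k[i]=1$ if $g_i>1$; $\xi^{(t)}_k[i]=\xi_k[i]$ if $\epsilon2^t<|\xi_k[i]|\le\epsilon2^{t+1}$ and $0$ otherwise; $x_{k+1}[i]=x_k[i]\exp(-\alpha\,\xi^{(t_k)}_k[i])$. Bucket indicators: for each $k,i$, let $b_k(i)\in\{0,\dots,w-1\}$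 be the unique $t$ with $\epsilon2^t<|\xi_k[i]|\le\epsilon2^{t+1}$ if $\xi_k[i]\ne0$, and $b_k(i)=0$ if $\xi_k[i]=0$; let $Z^{(i)}_k=1$ if $t_k=b_k(i)$ and $0$ otherwise. Define $S_i=w\sum_{k=0}^{T-1}Z^{(i)}_k\big(\min\{\nabla_i f_\mu(x_k),1\}+\epsilon\big)$ and $U_i=\sum_{k=0}^{T-1}\big(\min\{\nabla_i f_\mu(x_k),1\}+\epsilon\big)$. *)

From Stdlib Require Import Reals Lra Lia List.
Import ListNotations.
Open Scope R_scope.

(* A matrix A in R^{m x n} is a function A j i (row j < m, column i < n). *)

Definition rsum (m : nat) (f : nat -> R) : R :=
  fold_right Rplus 0 (map f (seq 0 m)).

Definition colnorm (A : nat -> nat -> R) (m i : nat) : R :=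
  fold_right Rmax 0 (map (fun j => Rabs (A j i)) (seq 0 m)).

Definition valid_matrix (A : nat -> nat -> R) (m n : nat) : Prop :=
  (forall j i, (j < m)%nat -> (i < n)%nat -> 0 <= A j i) /\
  (forall i, (i < n)%nat -> exists j, (j < m)%nat /\ A j i <> 0) /\
  (* min_{i in [n]} ||A_{:i}||_inf = 1 *)
  (forall i, (i < n)%nat -> 1 <= colnorm A m i) /\
  (exists i, (i < n)%nat /\ colnorm A m i = 1).

Definition log2 (x : R) : R := ln x / ln 2.

Definition Rceil (x : R) : Z := (- Int_part (- x))%Z.

Section Alg.
Variables (A : nat -> nat -> R) (m n : nat) (eps : R).

Definition mu : R := eps / (4 * ln (INR n * INR m / eps)).

Definition Ax (x : nat -> R) (j : nat) : R := rsum n (fun i => A j i * x i).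

Definition pj (x : nat -> R) (j : nat) : R := exp ((1 / mu) * (Ax x j - 1)).

Definition f_mu (x : nat -> R) : R :=
  - rsum n x + mu * rsum m (fun j => pj x j).

Definition grad (x : nat -> R) (i : nat) : R :=
  -1 + rsum m (fun j => A j i * pj x j).

Definition alpha : R := mu / 20.

Definition w : nat := Z.to_nat (Rceil (log2 (1 / eps))).

Definition x0 (i : nat) : R := (1 - eps / 2) / (INR n * colnorm A m i).

Definition xi (x : nat -> R) (i : nat) : R :=
  let g := grad x i in
  if Rle_dec (Rabs g) eps then 0
  else if Rlt_dec 1 g then 1
  else g.

Definition in_bucket (t : nat) (v : R) : Prop :=
  eps * 2 ^ t < Rabs v <= eps * 2 ^ (S t).

Definition in_bucket_dec (t : nat) (v : R) : bool :=
  if Rlt_dec (eps * 2 ^ t) (Rabs v) then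
    if Rle_dec (Rabs v) (eps * 2 ^ (S t)) then true else false
  else false.

Definition xit (t : nat) (x : nat -> R) (i : nat) : R :=
  if in_bucket_dec t (xi x i) then xi x i else 0.

(* iterate x_k given the random choices ts = [t_0; t_1; ...] *)
Fixpoint iterx (ts : list nat) (k : nat) : nat -> R :=
  match k with
  | O => x0
  | S k' => fun i => iterx ts k' i * exp (- alpha * xit (nth k' ts O) (iterx ts k') i)
  end.

Fixpoint find_bucket (lo cnt : nat) (v : R) : nat :=
  match cnt with
  | O => O
  | S c => if in_bucket_dec lo v then lo else find_bucket (S lo) c v
  end.

Definition bucket (v : R) : nat :=
  if Req_EM_T v 0 then O else find_bucket O w v.

Definition Zind (ts : list nat) (k i : nat) : R :=
  if Nat.eq_dec (nth k ts O) (bucket (xi (iterx ts k) i)) then 1 else 0.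

Definition S_i (T : nat) (ts : list nat) (i : nat) : R :=
  INR w * rsum T (fun k => Zind ts k i * (Rmin (grad (iterx ts k) i) 1 + eps)).

Definition U_i (T : nat) (ts : list nat) (i : nat) : R :=
  rsum T (fun k => Rmin (grad (iterx ts k) i) 1 + eps).

End Alg.

Fixpoint all_seqs (w T : nat) : list (list nat) :=
  match T with
  | O => [[]]
  | S T' => flat_map (fun a => map (cons a) (all_seqs w T')) (seq 0 w)
  end.

(* Probability of event E (a boolean predicate on the choice sequence) when
   t_0..t_{T-1} are i.i.d. uniform on {0..w-1}: (#favourable sequences) / w^T *)
Definition prob_unif (w T : nat) (E : list nat -> bool) : R :=
  fold_right Rplus 0
    (map (fun ts => if E ts then 1 else 0) (all_seqs w T)) / (INR w ^ T).

Definition Rgeb (a b : R) : bool := if Rle_dec b a then true else false.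

From Pilot Require Import Defs.
From Stdlib Require Import Reals Lra Lia List.
Import ListNotations.
Open Scope R_scope.

(* Writing x_k = min(grad_i f(x_k), 1) + eps, which lies in [-1, 3/2] and depends only on
   t_0 .. t_{k-1}, we have S_i - U_i = sum_k (w Z_k - 1) x_k, and given the past Z_k = 1
   with probability exactly 1/w.  Hence each increment has conditional moment generating
   function at most 1 + 9/5 (w - 1) lam^2 (from e^y <= 1 + y + 4/5 y^2 on [-1/5, 1/5]);
   multiplying these bounds along the sequence and applying Markov's inequality to
   exp (lam (S_i - U_i)) with lam = eps / w^2 gives the tail exp (-11/20 eps^2 T / w^2),
   which is at most eps / n for the stated T. *)

Lemma exp_le_mono x y : x <= y -> exp x <= exp y.
Proof.
  intros Hxy; destruct (Req_dec x y) as [-> | Hne]; [lra |].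
  apply Rlt_le, exp_increasing; lra.
Qed.

Lemma exp_pow_INR z T : exp z ^ T = exp (INR T * z).
Proof.
  induction T as [| T IH]; [simpl; rewrite Rmult_0_l, exp_0; ring |].
  rewrite S_INR, <- tech_pow_Rmult, IH, <- exp_plus; f_equal; ring.
Qed.

Lemma pow_1_plus_le_exp z T : -1 <= z -> (1 + z) ^ T <= exp (INR T * z).
Proof.
  intros Hz; rewrite <- exp_pow_INR.
  apply pow_incr; split; [lra | apply exp_ineq1_le].
Qed.

(* exp y = exp (-y/4)^-4 <= (1 - y/4)^-4, and (1 - y/4)^4 (1 + y + 4/5 y^2) - 1 is
   y^2 times a quartic that stays positive on [-1/5, 1/5]. *)
Lemma exp_le_quadratic y : -1/5 <= y <= 1/5 -> exp y <= 1 + y + 4/5 * y ^ 2.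
Proof.
  intros Hy.
  assert (Hquartic : 1 <= (1 - y/4) ^ 4 * (1 + y + 4/5 * y ^ 2)).
  { assert (0 <= y ^ 2) by nra. assert (-1/125 <= y ^ 3 <= 1/125) by nra.
    assert (0 <= y ^ 4) by nra.
    set (q := 7/40 - 39/80*y + 309/1280*y^2 - 59/1280*y^3 + 1/320*y^4).
    assert (Hq : 0 <= q) by (unfold q; nra).
    replace ((1 - y/4) ^ 4 * (1 + y + 4/5 * y ^ 2)) with (1 + y ^ 2 * q)
      by (unfold q; field).
    nra. }
  assert (Hinv : exp y * exp (- (y/4)) ^ 4 = 1).
  { rewrite exp_pow_INR, <- exp_plus, <- exp_0; f_equal; simpl; field. }
  assert ((1 - y/4) ^ 4 <= exp (- (y/4)) ^ 4)
    by (apply pow_incr; split; [lra | apply exp_ineq1_le]).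
  assert (0 < (1 - y/4) ^ 4) by (apply pow_lt; lra).
  pose proof (exp_pos y).
  nra.
Qed.

Definition lsum {X : Type} (f : X -> R) (l : list X) : R := fold_right Rplus 0 (map f l).
Definition lprod {X : Type} (f : X -> R) (l : list X) : R := fold_right Rmult 1 (map f l).

Section ListSums.
Context {X : Type}.

Lemma lsum_cons (f : X -> R) x l : lsum f (x :: l) = f x + lsum f l.
Proof. reflexivity. Qed.

Lemma lsum_app (f : X -> R) l1 l2 : lsum f (l1 ++ l2) = lsum f l1 + lsum f l2.
Proof.
  induction l1 as [| x l1 IH]; [unfold lsum; cbn; ring |].
  cbn -[lsum]; rewrite !lsum_cons, IH; ring.
Qed.

Lemma lsum_ext_in (f g : X -> R) l : (forall x, In x l -> f x = g x) -> lsum f l = lsum g l.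
Proof. intros H; unfold lsum; now rewrite (map_ext_in f g l H). Qed.

Lemma lsum_ext (f g : X -> R) l : (forall x, f x = g x) -> lsum f l = lsum g l.
Proof. intros H; apply lsum_ext_in; auto. Qed.

Lemma lsum_const (c : R) l : lsum (fun _ : X => c) l = INR (length l) * c.
Proof.
  induction l as [| x l IH]; [unfold lsum; cbn; ring |].
  rewrite lsum_cons, IH, length_cons, S_INR; ring.
Qed.

Lemma lsum_le (f g : X -> R) l : (forall x, f x <= g x) -> lsum f l <= lsum g l.
Proof.
  intros H; induction l as [| x l IH]; [unfold lsum; cbn; lra |].
  rewrite !lsum_cons; specialize (H x); lra.
Qed.

Lemma lsum_ge0 (f : X -> R) l : (forall x, In x l -> 0 <= f x) -> 0 <= lsum f l.
Proof.
  induction l as [| x l IH]; intros H; [unfold lsum; cbn; lra |].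
  rewrite lsum_cons.
  assert (0 <= f x) by (apply H; left; auto).
  assert (0 <= lsum f l) by (apply IH; intros; apply H; right; auto).
  lra.
Qed.

Lemma lsum_scal c (f : X -> R) l : lsum (fun x => c * f x) l = c * lsum f l.
Proof. induction l as [| x l IH]; [unfold lsum; cbn; ring | rewrite !lsum_cons, IH; ring]. Qed.

Lemma lsum_scal_sub c (f g : X -> R) l :
  c * lsum f l - lsum g l = lsum (fun x => c * f x - g x) l.
Proof. induction l as [| x l IH]; [unfold lsum; cbn; ring | rewrite !lsum_cons, <- IH; ring]. Qed.

Lemma exp_lsum (f : X -> R) l : exp (lsum f l) = lprod (fun x => exp (f x)) l.
Proof.
  induction l as [| x l IH]; [apply exp_0 |].
  rewrite lsum_cons, exp_plus, IH; reflexivity.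
Qed.

End ListSums.

Lemma lsum_map {X Y : Type} (f : Y -> R) (g : X -> Y) l :
  lsum f (map g l) = lsum (fun x => f (g x)) l.
Proof. unfold lsum; now rewrite map_map. Qed.

Lemma lsum_flat_map {X Y : Type} (f : Y -> R) (g : X -> list Y) l :
  lsum f (flat_map g l) = lsum (fun x => lsum f (g x)) l.
Proof.
  induction l as [| x l IH]; [reflexivity |].
  change (flat_map g (x :: l)) with (g x ++ flat_map g l).
  now rewrite lsum_app, IH.
Qed.

Lemma lsum_seq_indicator (u v : R) b lo W : (lo <= b < lo + W)%nat ->
  lsum (fun a => if Nat.eq_dec a b then u else v) (seq lo W) = u + (INR W - 1) * v.
Proof.
  revert lo; induction W as [| W IH]; intros lo Hb; [lia |].
  cbn [seq]; rewrite lsum_cons.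
  destruct (Nat.eq_dec lo b) as [<- | Hne].
  - rewrite (lsum_ext_in _ (fun _ => v)), lsum_const, length_seq, S_INR; [ring |].
    intros k Hk; apply in_seq in Hk; destruct (Nat.eq_dec k lo); [lia | auto].
  - rewrite IH by lia; rewrite S_INR; ring.
Qed.

Section AdaptedProducts.
Variables (W : nat) (F : list nat -> nat -> R) (B : R).
Hypothesis F_ge0 : forall ts k, 0 <= F ts k.
Hypothesis F_adapted : forall p a s, F (p ++ a :: s) (length p) = F (p ++ [a]) (length p).
Hypothesis F_step_le : forall p, lsum (fun a => F (p ++ [a]) (length p)) (seq 0 W) <= INR W * B.
Hypothesis B_ge0 : 0 <= B.

(* A sum over [all_seqs W r] is W^r times an expectation; conditionally on the
   prefix, each adapted factor averages to at most B. *)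
Lemma lsum_all_seqs_lprod_le r p :
  lsum (fun s => lprod (F (p ++ s)) (seq (length p) r)) (all_seqs W r) <= (INR W * B) ^ r.
Proof.
  revert p; induction r as [| r IH]; intros p.
  { unfold lsum, lprod; cbn; lra. }
  cbn [all_seqs]; rewrite lsum_flat_map.
  assert (HWB : 0 <= (INR W * B) ^ r) by (apply pow_le, Rmult_le_pos; [apply pos_INR | auto]).
  apply Rle_trans with (lsum (fun a => (INR W * B) ^ r * F (p ++ [a]) (length p)) (seq 0 W)).
  - apply lsum_le; intros a; rewrite lsum_map.
    rewrite (lsum_ext _ (fun s => F (p ++ [a]) (length p) *
                                  lprod (F ((p ++ [a]) ++ s)) (seq (length (p ++ [a])) r))).
    + rewrite lsum_scal, Rmult_comm; apply Rmult_le_compat_r; [apply F_ge0 | apply IH].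
    + intros s; rewrite <- app_assoc, length_app, Nat.add_1_r; cbn [app].
      unfold lprod; cbn [seq map fold_right]; now rewrite F_adapted.
  - rewrite lsum_scal, <- tech_pow_Rmult, Rmult_comm.
    apply Rmult_le_compat_r; [exact HWB | apply F_step_le].
Qed.

End AdaptedProducts.

Lemma Rgeb_indicator_le_exp lam x a : 0 <= lam ->
  (if Rgeb x a then 1 else 0) <= exp (lam * (x - a)).
Proof.
  intros Hlam; unfold Rgeb; destruct (Rle_dec a x).
  - pose proof (exp_ineq1_le (lam * (x - a))). assert (0 <= lam * (x - a)) by nra. lra.
  - apply Rlt_le, exp_pos.
Qed.

Lemma prob_unif_Rgeb_le W T (X : list nat -> R) a lam : (0 < W)%nat -> 0 <= lam ->
  prob_unif W T (fun ts => Rgeb (X ts) a)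
  <= exp (- (lam * a)) * lsum (fun ts => exp (lam * X ts)) (all_seqs W T) / INR W ^ T.
Proof.
  intros HW Hlam; unfold prob_unif, Rdiv.
  apply Rmult_le_compat_r.
  { apply Rlt_le, Rinv_0_lt_compat, pow_lt, lt_0_INR; lia. }
  fold (lsum (fun ts => if Rgeb (X ts) a then 1 else 0) (all_seqs W T)).
  rewrite <- lsum_scal; apply lsum_le; intros ts.
  rewrite <- exp_plus.
  replace (- (lam * a) + lam * X ts) with (lam * (X ts - a)) by ring.
  now apply Rgeb_indicator_le_exp.
Qed.

(* W times the moment generating function of (W Z - 1) y, Z a Bernoulli(1/W) variable. *)
Lemma two_point_mgf_le (W y : R) : 1 <= W ->
  -1/5 <= (W - 1) * y <= 1/5 -> (1 < W -> -1/5 <= y <= 1/5) ->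
  exp ((W - 1) * y) + (W - 1) * exp (- y) <= W + 4/5 * W * (W - 1) * y ^ 2.
Proof.
  intros HW Hy1 Hy.
  assert (Hlow : (W - 1) * exp (- y) <= (W - 1) * (1 - y + 4/5 * y ^ 2)).
  { destruct (Req_dec W 1) as [-> | Hne]; [lra |].
    apply Rmult_le_compat_l; [lra |].
    replace (1 - y + 4/5 * y ^ 2) with (1 + - y + 4/5 * (- y) ^ 2) by ring.
    apply exp_le_quadratic; specialize (Hy ltac:(lra)); lra. }
  pose proof (exp_le_quadratic ((W - 1) * y) Hy1).
  nra.
Qed.

Lemma iterx_prefix A m n eps ts ts' k :
  (forall j, (j < k)%nat -> nth j ts O = nth j ts' O) ->
  iterx A m n eps ts k = iterx A m n eps ts' k.
Proof.
  induction k as [| k IH]; intros H; [reflexivity |]; cbn.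
  rewrite IH by (intros; apply H; lia); now rewrite (H k) by lia.
Qed.

Lemma find_bucket_range eps lo cnt v :
  find_bucket eps lo cnt v = O \/ (find_bucket eps lo cnt v < lo + cnt)%nat.
Proof.
  revert lo; induction cnt as [| cnt IH]; intros lo; cbn; [left; auto |].
  destruct (in_bucket_dec eps lo v); [right; lia |].
  destruct (IH (S lo)); [left | right]; lia.
Qed.

Lemma bucket_lt_w eps v : (1 <= w eps)%nat -> (bucket eps v < w eps)%nat.
Proof.
  intros Hw; unfold bucket; destruct (Req_EM_T v 0); [lia |].
  destruct (find_bucket_range eps 0 (w eps) v) as [-> | ?]; lia.
Qed.

Lemma grad_ge_m1 A m n eps x i : valid_matrix A m n -> (i < n)%nat -> -1 <= grad A m n eps x i.
Proof.
  intros [HA _] Hi; unfold grad.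
  enough (0 <= lsum (fun j => A j i * pj A m n eps x j) (seq 0 m)) by (unfold rsum, lsum in *; lra).
  apply lsum_ge0; intros j Hj; apply in_seq in Hj.
  apply Rmult_le_pos; [apply HA; lia | apply Rlt_le, exp_pos].
Qed.

Section Increments.
Variables (A : nat -> nat -> R) (m n : nat) (eps : R) (i : nat).

Definition capped_grad (ts : list nat) (k : nat) : R :=
  Rmin (grad A m n eps (iterx A m n eps ts k) i) 1 + eps.

Definition increment (ts : list nat) (k : nat) : R :=
  (INR (w eps) * Defs.Zind A m n eps ts k i - 1) * capped_grad ts k.

Lemma S_i_sub_U_i T ts :
  S_i A m n eps T ts i - U_i A m n eps T ts i = lsum (increment ts) (seq 0 T).
Proof.
  change (INR (w eps) * lsum (fun k => Defs.Zind A m n eps ts k i * capped_grad ts k) (seq 0 T)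
          - lsum (capped_grad ts) (seq 0 T) = lsum (increment ts) (seq 0 T)).
  rewrite lsum_scal_sub; apply lsum_ext; intros k; unfold increment; ring.
Qed.

Lemma iterx_app p s : iterx A m n eps (p ++ s) (length p) = iterx A m n eps p (length p).
Proof. apply iterx_prefix; intros j Hj; now rewrite app_nth1. Qed.

Lemma capped_grad_prefix p s : capped_grad (p ++ s) (length p) = capped_grad p (length p).
Proof. unfold capped_grad; now rewrite iterx_app. Qed.

Lemma increment_adapted p a s :
  increment (p ++ a :: s) (length p) = increment (p ++ [a]) (length p).
Proof.
  unfold increment, Defs.Zind.
  now rewrite !capped_grad_prefix, !iterx_app, !nth_middle.
Qed.

Lemma capped_grad_bounds ts k : valid_matrix A m n -> (i < n)%nat -> 0 < eps <= 1/2 ->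
  -1 <= capped_grad ts k <= 3/2.
Proof.
  intros HA Hi Heps; unfold capped_grad.
  pose proof (grad_ge_m1 A m n eps (iterx A m n eps ts k) i HA Hi).
  unfold Rmin; destruct Rle_dec; lra.
Qed.

Lemma lsum_exp_increment_step lam p : (1 <= w eps)%nat ->
  lsum (fun a => exp (lam * increment (p ++ [a]) (length p))) (seq 0 (w eps))
  = exp ((INR (w eps) - 1) * (lam * capped_grad p (length p)))
    + (INR (w eps) - 1) * exp (- (lam * capped_grad p (length p))).
Proof.
  intros Hw.
  set (b := bucket eps (xi A m n eps (iterx A m n eps p (length p)) i)).
  rewrite (lsum_ext _ (fun a => if Nat.eq_dec a b
    then exp ((INR (w eps) - 1) * (lam * capped_grad p (length p)))
    else exp (- (lam * capped_grad p (length p))))).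
  - apply lsum_seq_indicator; pose proof (bucket_lt_w eps
      (xi A m n eps (iterx A m n eps p (length p)) i) Hw); lia.
  - intros a; unfold increment, Defs.Zind.
    rewrite capped_grad_prefix, iterx_app, nth_middle.
    fold b; destruct (Nat.eq_dec a b); f_equal; ring.
Qed.

Lemma increment_step_mgf_le lam p :
  valid_matrix A m n -> (i < n)%nat -> 0 < eps <= 1/2 -> (1 <= w eps)%nat -> 0 <= lam ->
  3/2 * lam * (INR (w eps) - 1) <= 1/5 -> ((2 <= w eps)%nat -> 3/2 * lam <= 1/5) ->
  lsum (fun a => exp (lam * increment (p ++ [a]) (length p))) (seq 0 (w eps))
  <= INR (w eps) * (1 + 9/5 * (INR (w eps) - 1) * lam ^ 2).
Proof.
  intros HA Hi Heps Hw Hlam Hrate1 Hrate2.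
  rewrite lsum_exp_increment_step by exact Hw.
  set (x := capped_grad p (length p)).
  assert (Hx : -1 <= x <= 3/2) by (apply capped_grad_bounds; auto).
  assert (HW : 1 <= INR (w eps)) by (apply (le_INR 1); exact Hw).
  assert (Hwx : 0 <= lam * (INR (w eps) - 1)) by (apply Rmult_le_pos; lra).
  eapply Rle_trans; [apply two_point_mgf_le; [exact HW | nra |] |].
  - intros HW2; change 1 with (INR 1) in HW2; apply INR_lt in HW2.
    specialize (Hrate2 ltac:(lia)); nra.
  - assert (Hsq : (lam * x) ^ 2 <= 9/4 * lam ^ 2).
    { rewrite Rpow_mult_distr, (Rmult_comm (9/4)); apply Rmult_le_compat_l; nra. }
    assert (0 <= INR (w eps) * (INR (w eps) - 1)) by nra.
    nra.
Qed.

End Increments.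

Lemma lsum_exp_S_i_sub_U_i_le A m n eps i T lam :
  valid_matrix A m n -> (i < n)%nat -> 0 < eps <= 1/2 -> (1 <= w eps)%nat -> 0 <= lam ->
  3/2 * lam * (INR (w eps) - 1) <= 1/5 -> ((2 <= w eps)%nat -> 3/2 * lam <= 1/5) ->
  lsum (fun ts => exp (lam * (S_i A m n eps T ts i - U_i A m n eps T ts i))) (all_seqs (w eps) T)
  <= (INR (w eps) * (1 + 9/5 * (INR (w eps) - 1) * lam ^ 2)) ^ T.
Proof.
  intros HA Hi Heps Hw Hlam Hrate1 Hrate2.
  assert (HB : 0 <= 1 + 9/5 * (INR (w eps) - 1) * lam ^ 2).
  { assert (1 <= INR (w eps)) by (apply (le_INR 1); exact Hw). nra. }
  rewrite (lsum_ext _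
    (fun ts => lprod (fun k => exp (lam * increment A m n eps i ts k)) (seq 0 T))).
  - exact (lsum_all_seqs_lprod_le (w eps) (fun ts k => exp (lam * increment A m n eps i ts k)) _
      (fun ts k => Rlt_le _ _ (exp_pos _))
      (fun p a s => f_equal (fun d => exp (lam * d)) (increment_adapted A m n eps i p a s))
      (fun p => increment_step_mgf_le A m n eps i lam p HA Hi Heps Hw Hlam Hrate1 Hrate2)
      HB T []).
  - intros ts; rewrite S_i_sub_U_i, <- lsum_scal, exp_lsum; reflexivity.
Qed.

Lemma prob_S_i_sub_U_i_ge_le A m n eps i T a lam :
  valid_matrix A m n -> (i < n)%nat -> 0 < eps <= 1/2 -> (1 <= w eps)%nat -> 0 <= lam ->
  3/2 * lam * (INR (w eps) - 1) <= 1/5 -> ((2 <= w eps)%nat -> 3/2 * lam <= 1/5) ->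
  prob_unif (w eps) T (fun ts => Rgeb (S_i A m n eps T ts i - U_i A m n eps T ts i) a)
  <= exp (- (lam * a)) * (1 + 9/5 * (INR (w eps) - 1) * lam ^ 2) ^ T.
Proof.
  intros HA Hi Heps Hw Hlam Hrate1 Hrate2.
  assert (HW : 0 < INR (w eps) ^ T) by (apply pow_lt, lt_0_INR; lia).
  eapply Rle_trans; [apply (prob_unif_Rgeb_le _ _ _ _ lam); [lia | exact Hlam] |].
  unfold Rdiv; apply Rmult_le_reg_r with (INR (w eps) ^ T); [exact HW |].
  rewrite Rmult_assoc, Rinv_l, Rmult_1_r by lra.
  rewrite Rmult_assoc, <- Rpow_mult_distr, (Rmult_comm _ (INR (w eps))).
  apply Rmult_le_compat_l; [apply Rlt_le, exp_pos |].
  now apply lsum_exp_S_i_sub_U_i_le.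
Qed.

Lemma ln_ge0 x : 1 <= x -> 0 <= ln x.
Proof.
  intros Hx; rewrite <- ln_1; destruct (Req_dec x 1) as [-> | Hne]; [lra |].
  apply Rlt_le, ln_increasing; lra.
Qed.

Lemma w_ge1 eps : 0 < eps <= 1/2 -> (1 <= w eps)%nat.
Proof.
  intros Heps; unfold w, Rceil, log2.
  assert (Hln2 : 0 < ln 2) by (rewrite <- ln_1; apply ln_increasing; lra).
  assert (Hinv : 2 <= 1 / eps) by (apply Rmult_le_reg_r with eps; [lra | field_simplify; lra]).
  assert (Hlog : 1 <= ln (1 / eps) / ln 2).
  { apply Rmult_le_reg_r with (ln 2); [lra |].
    assert (ln 2 <= ln (1 / eps)).
    { destruct (Req_dec (1 / eps) 2) as [-> | Hne]; [lra |].
      apply Rlt_le, ln_increasing; lra. }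
    field_simplify; lra. }
  destruct (base_Int_part (- (ln (1 / eps) / ln 2))) as [Hfloor _].
  assert (Int_part (- (ln (1 / eps) / ln 2)) <= -1)%Z
    by (apply le_IZR; rewrite IZR_NEG; simpl; lra).
  lia.
Qed.

Lemma chernoff_rate_le W eps : 1 <= W -> 0 < eps ->
  eps / W ^ 2 * (W - 1) <= eps / 4 /\ (2 <= W -> eps / W ^ 2 <= eps / 4).
Proof.
  intros HW Heps.
  assert (Hlam : 0 < eps / W ^ 2) by (apply Rdiv_lt_0_compat; nra).
  assert (Hlam2 : eps / W ^ 2 * W ^ 2 = eps) by (field; lra).
  split.
  - assert (0 <= (W - 2) ^ 2) by apply pow2_ge_0.
    assert (eps / W ^ 2 * (4 * (W - 1)) <= eps / W ^ 2 * W ^ 2)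
      by (apply Rmult_le_compat_l; nra).
    lra.
  - intros HW2; assert (eps / W ^ 2 * 4 <= eps / W ^ 2 * W ^ 2)
      by (apply Rmult_le_compat_l; nra).
    lra.
Qed.

(* With lam = eps / W^2 the quadratic term costs at most 9/20 of the linear gain
   lam eps T = eps^2 T / W^2 >= 2 L. *)
Lemma chernoff_exponent_le W eps L T : 1 <= W -> 0 < eps <= 1/2 -> 0 <= L ->
  INR T >= 2 * W ^ 2 * L / eps ^ 2 ->
  - (eps / W ^ 2 * (eps * INR T)) + INR T * (9/5 * (W - 1) * (eps / W ^ 2) ^ 2) <= - L.
Proof.
  intros HW Heps HL HT.
  set (lam := eps / W ^ 2).
  assert (HW2 : 0 < W ^ 2) by nra.
  assert (Hlam : lam * W ^ 2 = eps) by (unfold lam; field; lra).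
  assert (Hlam0 : 0 < lam) by (unfold lam; apply Rdiv_lt_0_compat; lra).
  destruct (chernoff_rate_le W eps HW ltac:(lra)) as [Hrate _]; fold lam in Hrate.
  assert (HT0 : 0 <= INR T) by apply pos_INR.
  assert (Hgain : lam * eps * INR T >= 2 * L).
  { assert (INR T * eps ^ 2 >= 2 * W ^ 2 * L).
    { replace (2 * W ^ 2 * L) with (2 * W ^ 2 * L / eps ^ 2 * eps ^ 2) by (field; lra).
      apply Rle_ge, Rmult_le_compat_r; [nra | lra]. }
    assert (lam * eps * INR T * W ^ 2 = INR T * eps ^ 2) by (rewrite <- Hlam; ring).
    nra. }
  assert (Hcost : INR T * (9/5 * (W - 1) * lam ^ 2) <= 9/20 * (lam * eps * INR T)).
  { replace (INR T * (9/5 * (W - 1) * lam ^ 2))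
      with (9/5 * (lam * INR T) * (lam * (W - 1))) by ring.
    assert (0 <= lam * INR T) by nra. nra. }
  nra.
Qed.

Theorem lemma4p3 (A : nat -> nat -> R) (m n : nat) (eps : R) (T : nat) :
  valid_matrix A m n ->
  0 < eps <= 1 / 2 ->
  INR T >= 2 * INR (w eps) ^ 2 * ln (INR n / eps) / eps ^ 2 ->
  forall i : nat, (i < n)%nat ->
    prob_unif (w eps) T
      (fun ts => Rgeb (S_i A m n eps T ts i - U_i A m n eps T ts i) (eps * INR T))
    <= eps / INR n.
Proof.
  intros HA Heps HT i Hi.
  pose proof (w_ge1 eps Heps) as Hw.
  assert (HW : 1 <= INR (w eps)) by (apply (le_INR 1); exact Hw).
  assert (Hn : 1 <= INR n) by (apply (le_INR 1); lia).
  set (lam := eps / INR (w eps) ^ 2).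
  assert (Hlam : 0 <= lam) by (apply Rlt_le, Rdiv_lt_0_compat; nra).
  destruct (chernoff_rate_le (INR (w eps)) eps HW ltac:(lra)) as [Hrate1 Hrate2].
  fold lam in Hrate1, Hrate2.
  eapply Rle_trans; [apply (prob_S_i_sub_U_i_ge_le _ _ _ _ _ _ _ lam); auto; [lra |] |].
  { intros Hw2; apply (le_INR 2) in Hw2; simpl in Hw2; specialize (Hrate2 Hw2); lra. }
  assert (HL : 0 <= ln (INR n / eps))
    by (apply ln_ge0, Rmult_le_reg_r with eps; [lra | field_simplify; lra]).
  replace (eps / INR n) with (exp (- ln (INR n / eps)))
    by (rewrite exp_Ropp, exp_ln by (apply Rdiv_lt_0_compat; lra); field; lra).
  eapply Rle_trans.
  { apply Rmult_le_compat_l; [apply Rlt_le, exp_pos | apply pow_1_plus_le_exp].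
    assert (0 <= lam ^ 2) by apply pow2_ge_0. nra. }
  rewrite <- exp_plus; apply exp_le_mono.
  now apply chernoff_exponent_le.
Qed.
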